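(* Let $h>0$ and let $\Sigma=X(\mathbb R^2)$, $X(u,v)=(e^{vJ}\alpha(u),\phi(u),hv)$, be a helicoidal surface of pitch $h$, oriented by $\eta$. Then $\Sigma$ is a rotator to MCF in $\mathbb H^2\times\mathbb R$ if and only if its mean curvature satisfies $$H(X(u,v))=\frac{\rho\,\tau}{\phi}=\frac{h\,\tau(u)}{\sqrt{\tau(u)^2+h^2(1+\mu(u)^2)}}\quad\text{for all }(u,v)\in\mathbb R^2.$$
   Context: Let $\mathbb L^3=(\mathbb R^3,\langle\cdot,\cdot\rangle)$ with $\langle\cdot,\cdot\rangle=dx_1^2+dx_2^2-dx_3^2$, and let $\mathbb H^2=\{p\in\mathbb L^3:\langle p,p\rangle=-1,\ x_3(p)>0\}$ (hyperboloid model) with the induced metric. The space $\mathbb H^2\times\mathbb R\subset\mathbb L^3\times\mathbb R$ carries the product metric $\langle\cdot,\cdot\rangle_{\mathbb H^2}+dt^2$. Identify $\mathbb R^2$ with $\{x_3=0\}\subset\mathbb L^3$ and let $J(x_1,x_2)=(-x_2,x_1)$; $e^{vJ}$ is the Euclidean rotation of $\mathbb R^2$ by angle $v$. For a regular curve $\alpha:\mathbb R\to\mathbb R^2$ parametrized by Euclidean arc length, set $T=\alpha'$, $N=JT$, $\tau=\langle\alpha,T\rangle$, $\mu=\langle\alpha,N\rangle$ (Euclidean inner products), and $\phi=\sqrt{1+|\alpha|^2}$, so that $\sigma=(\alpha,\phi)$ is a curve in $\mathbb H^2$. The surface is oriented by the unit normal $\eta=\rho\,(e^{vJ}(aT+bN),\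 \mu,\ c)$ (components: the $\mathbb R^2$-part, the $x_3$-part, and the $\mathbb R$-factor part in $\mathbb L^3\times\mathbb R$), where, evaluated at $u$, $a=\mu\phi'$, $b=(1+\mu^2)/\phi$, $c=-\phi'/h$ and $\rho=(a^2+b^2-\mu^2+c^2)^{-1/2}$. The mean curvature $H$ is taken with respect to $\eta$ (half the trace of the second fundamental form $\langle\bar\nabla_{\cdot}\cdot,\eta\rangle$). Let $\xi(x_1,x_2,x_3,t)=(-x_2,x_1,0,0)$ be the Killing field generated by the rotations $\mathrm{diag}(e^{tJ},1,1)$ about the axis $\{(0,0,1)\}\times\mathbb R$. The surface is a rotator to MCF if $H=\langle\xi,\eta\rangle$ everywhere on it. *)

From Stdlib Require Import Reals.
From Coquelicot Require Import Coquelicot.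
Open Scope R_scope.

(* Points/vectors of L^3 x R = R^4, coordinates (x1, x2, x3, t). *)
Record V4 := mkV4 { c1 : R; c2 : R; c3 : R; c4 : R }.

Definition ip4 (p q : V4) : R :=
  c1 p * c1 q + c2 p * c2 q - c3 p * c3 q + c4 p * c4 q.

Definition du (F : R -> R -> V4) (u v : R) : V4 :=
  mkV4 (Derive (fun s => c1 (F s v)) u) (Derive (fun s => c2 (F s v)) u)
       (Derive (fun s => c3 (F s v)) u) (Derive (fun s => c4 (F s v)) u).
Definition dv (F : R -> R -> V4) (u v : R) : V4 :=
  mkV4 (Derive (fun s => c1 (F u s)) v) (Derive (fun s => c2 (F u s)) v)
       (Derive (fun s => c3 (F u s)) v) (Derive (fun s => c4 (F u s)) v).

(* Since Nf is tangent to H^2 x R, <Dbar_{X_i} X_j, Nf> = <X_ij, Nf>_{L^3 x R}. *)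
Definition mean_curv (F : R -> R -> V4) (Nf : R -> R -> V4) (u v : R) : R :=
  let Xu := du F u v in
  let Xv := dv F u v in
  let E := ip4 Xu Xu in
  let Fm := ip4 Xu Xv in
  let G := ip4 Xv Xv in
  let L := ip4 (du (du F) u v) (Nf u v) in
  let M := ip4 (dv (du F) u v) (Nf u v) in
  let N := ip4 (dv (dv F) u v) (Nf u v) in
  (G * L - 2 * Fm * M + E * N) / (2 * (E * G - Fm ^ 2)).

Section Helicoidal.
(* The plane curve alpha = (a1, a2), parametrized by arc length; h the pitch. *)
Variables (h : R) (a1 a2 : R -> R).

Definition T1 u := Derive a1 u.
Definition T2 u := Derive a2 u.
(* N = J T = (-T2, T1) *)
Definition tau u := a1 u * T1 u + a2 u * T2 u.
Definition mu u := a1 u * (- T2 u) + a2 u * T1 u.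
Definition phi u := sqrt (1 + (a1 u ^ 2 + a2 u ^ 2)).
Definition dphi u := Derive phi u.

Definition ca u := mu u * dphi u.
Definition cb u := (1 + mu u ^ 2) / phi u.
Definition cc u := - dphi u / h.
Definition rho u := / sqrt (ca u ^ 2 + cb u ^ 2 - mu u ^ 2 + cc u ^ 2).

Definition Xsurf (u v : R) : V4 :=
  mkV4 (cos v * a1 u - sin v * a2 u) (sin v * a1 u + cos v * a2 u)
       (phi u) (h * v).

(* eta = rho (e^{vJ}(aT + bN), mu, c) *)
Definition eta (u v : R) : V4 :=
  let w1 := ca u * T1 u - cb u * T2 u in
  let w2 := ca u * T2 u + cb u * T1 u in
  mkV4 (rho u * (cos v * w1 - sin v * w2)) (rho u * (sin v * w1 + cos v * w2))
       (rho u * mu u) (rho u * cc u).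

Definition xi (p : V4) : V4 := mkV4 (- c2 p) (c1 p) 0 0.

Definition Hsurf (u v : R) : R := mean_curv Xsurf eta u v.

Definition is_rotator : Prop :=
  forall u v, Hsurf u v = ip4 (xi (Xsurf u v)) (eta u v).
End Helicoidal.

(* Being a rotator means H = <xi, eta>, so everything reduces to computing
   <xi, eta>.  The rotation e^{vJ} preserves the Euclidean inner product, so
   <xi, eta> = rho (b <alpha, T> - a <alpha, N>) = rho (b tau - a mu), and with
   phi' = tau / phi this is rho tau / phi.  Since alpha has unit speed,
   |alpha|^2 = tau^2 + mu^2, hence phi^2 = 1 + tau^2 + mu^2, and the radicand
   defining rho simplifies to (tau^2 + h^2 (1 + mu^2)) / (h phi)^2. *)
From Stdlib Require Import Reals Lra.
From Coquelicot Require Import Coquelicot.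
Open Scope R_scope.

Lemma lagrange_identity2 (x1 x2 y1 y2 : R) :
  (x1 * y1 + x2 * y2) ^ 2 + (x1 * - y2 + x2 * y1) ^ 2 =
  (x1 ^ 2 + x2 ^ 2) * (y1 ^ 2 + y2 ^ 2).
Proof. ring. Qed.

Section HelicoidalSurface.
Variables (h : R) (a1 a2 : R -> R).
Hypothesis hpos : 0 < h.
Hypothesis deriv_a1 : forall u, ex_derive a1 u.
Hypothesis deriv_a2 : forall u, ex_derive a2 u.
Hypothesis arclength : forall u : R, Derive a1 u ^ 2 + Derive a2 u ^ 2 = 1.

Lemma phi_gt0 u : 0 < phi a1 a2 u.
Proof. apply sqrt_lt_R0. nra. Qed.

Lemma norm_alpha_tau_mu u :
  a1 u ^ 2 + a2 u ^ 2 = tau a1 a2 u ^ 2 + mu a1 a2 u ^ 2.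
Proof.
  unfold tau, mu, T1, T2.
  rewrite lagrange_identity2, arclength. ring.
Qed.

Lemma phi_sqr u : phi a1 a2 u ^ 2 = 1 + tau a1 a2 u ^ 2 + mu a1 a2 u ^ 2.
Proof.
  unfold phi. rewrite pow2_sqrt by nra.
  rewrite norm_alpha_tau_mu. ring.
Qed.

Lemma dphi_eq u : dphi a1 a2 u = tau a1 a2 u / phi a1 a2 u.
Proof.
  pose proof (phi_gt0 u) as Hphi.
  apply is_derive_unique. unfold phi in *.
  auto_derive.
  - repeat split; [apply deriv_a1 | apply deriv_a2 | nra].
  - unfold tau, T1, T2.
    (* auto_derive leaves the curve eta-expanded *)
    change (fun x : R => a1 x) with a1. change (fun x : R => a2 x) with a2.
    replace (a1 u * (a1 u * 1) + a2 u * (a2 u * 1)) with (a1 u ^ 2 + a2 u ^ 2) by ring.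
    field. lra.
Qed.

Lemma ip4_xi_eta u v :
  ip4 (xi (Xsurf h a1 a2 u v)) (eta h a1 a2 u v) =
  rho h a1 a2 u * tau a1 a2 u / phi a1 a2 u.
Proof.
  pose proof (phi_gt0 u) as Hphi.
  transitivity (rho h a1 a2 u * (cb a1 a2 u * tau a1 a2 u - ca a1 a2 u * mu a1 a2 u)
                  * (sin v ^ 2 + cos v ^ 2)).
  { unfold ip4, xi, Xsurf, eta, tau, mu; simpl. ring. }
  rewrite <- !Rsqr_pow2, sin2_cos2, Rmult_1_r.
  unfold ca, cb. rewrite dphi_eq. field. lra.
Qed.

Lemma rho_radicand_eq u :
  ca a1 a2 u ^ 2 + cb a1 a2 u ^ 2 - mu a1 a2 u ^ 2 + cc h a1 a2 u ^ 2 =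
  (tau a1 a2 u ^ 2 + h ^ 2 * (1 + mu a1 a2 u ^ 2)) / (h * phi a1 a2 u) ^ 2.
Proof.
  pose proof (phi_gt0 u) as Hphi.
  unfold ca, cb, cc. rewrite dphi_eq.
  field_simplify_eq; [| split; lra].
  rewrite phi_sqr. ring.
Qed.

Lemma rho_tau_phi_eq u :
  rho h a1 a2 u * tau a1 a2 u / phi a1 a2 u =
  h * tau a1 a2 u / sqrt (tau a1 a2 u ^ 2 + h ^ 2 * (1 + mu a1 a2 u ^ 2)).
Proof.
  pose proof (phi_gt0 u) as Hphi.
  set (Q := tau a1 a2 u ^ 2 + h ^ 2 * (1 + mu a1 a2 u ^ 2)).
  assert (HsQ : 0 < sqrt Q) by (apply sqrt_lt_R0; unfold Q; nra).
  unfold rho. rewrite rho_radicand_eq. fold Q.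
  rewrite sqrt_div_alt by (apply pow2_gt_0; nra).
  rewrite sqrt_pow2 by nra.
  field. split; lra.
Qed.

End HelicoidalSurface.

Theorem lemma2p3 (h : R) (a1 a2 : R -> R)
  (hpos : 0 < h)
  (smooth1 : forall (k : nat) (u : R), ex_derive_n a1 k u)
  (smooth2 : forall (k : nat) (u : R), ex_derive_n a2 k u)
  (arclength : forall u : R, Derive a1 u ^ 2 + Derive a2 u ^ 2 = 1) :
  is_rotator h a1 a2 <->
  (forall u v : R,
     Hsurf h a1 a2 u v = rho h a1 a2 u * tau a1 a2 u / phi a1 a2 u /\
     Hsurf h a1 a2 u v =
       h * tau a1 a2 u / sqrt (tau a1 a2 u ^ 2 + h ^ 2 * (1 + mu a1 a2 u ^ 2))).
Proof.
  pose proof (smooth1 1%nat) as deriv_a1.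
  pose proof (smooth2 1%nat) as deriv_a2.
  pose proof (ip4_xi_eta h a1 a2 deriv_a1 deriv_a2) as xi_eta.
  unfold is_rotator. split.
  - intros Hrot u v. rewrite Hrot, xi_eta.
    split; [reflexivity | exact (rho_tau_phi_eq h a1 a2 hpos deriv_a1 deriv_a2 arclength u)].
  - intros Hmean u v. rewrite xi_eta. exact (proj1 (Hmean u v)).
Qed.
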